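(* Let $I$ be the set of all $231$-avoiding permutations (of all sizes $n\ge0$, including the empty permutation) all of whose cycles have length $1$ or $2$. Then \[ i(t,x)=\sum_{\pi\in I}t^{c_1(\pi)}x^{c_2(\pi)}=\dfrac{1-x}{1-t-2x}. \]
   Context: A permutation avoids $231$ if there are no indices $i<j<k$ with $\pi_k<\pi_i<\pi_j$. $c_k(\pi)$ denotes the number of $k$-cycles of $\pi$. *)

From mathcomp Require Import all_boot all_order all_algebra all_fingroup.
Set Implicit Arguments. Unset Strict Implicit. Unset Printing Implicit Defensive.
Import GRing.Theory Num.Theory.
Local Open Scope ring_scope.

Definition avoids231 n (p : 'S_n) : bool :=
  [forall i : 'I_n, forall j : 'I_n, forall k : 'I_n,
     ~~ [&& (i < j)%N, (j < k)%N, (p k < p i)%N & (p i < p j)%N]].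

Definition ncycles n (p : 'S_n) (k : nat) : nat :=
  #|[set C in porbits p | #|C| == k]|.

Definition cycles_le2 n (p : 'S_n) : bool :=
  [forall C in porbits p, (#|C| == 1)%N || (#|C| == 2)%N].

Definition in_I n (p : 'S_n) : bool := avoids231 p && cycles_le2 p.

(* Formal power series in t, x with integer coefficients: F a b = [t^a x^b] F *)
Definition fps := nat -> nat -> int.

Definition fps_mul (F G : fps) : fps := fun a b =>
  \sum_(i < a.+1) \sum_(j < b.+1) F i j * G (a - i)%N (b - j)%N.

(* coefficient of t^a x^b in i(t,x) = sum_{pi in I} t^{c1} x^{c2}.
   A permutation in I with c1 = a, c2 = b has size n = a + 2b, so the
   sum over all sizes n >= 0 reduces to n <= a + 2b. *)
Definition i_gf : fps := fun a b =>
  (\sum_(n < (a + 2 * b).+1)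
     #|[set p : 'S_n | in_I p && (ncycles p 1 == a) && (ncycles p 2 == b)]|)%:Z.

Definition den_poly : fps := fun a b =>
  if (a == 0)%N && (b == 0)%N then 1
  else if (a == 1)%N && (b == 0)%N then -1
  else if (a == 0)%N && (b == 1)%N then -2
  else 0.

Definition num_poly : fps := fun a b =>
  if (a == 0)%N && (b == 0)%N then 1
  else if (a == 0)%N && (b == 1)%N then -1
  else 0.

(* Let s be a 231-avoiding involution of {0, ..., n} and m = s(0).  For
   0 < j < m the pattern (0, j, m) forces 0 < s(j) < m, and the patterns
   (j, j', m) force s to decrease on [0, m]; hence s reverses [0, m], maps
   (m, n] to itself, and s = d_(m+1) (+) t for a smaller 231-avoiding
   involution t, where d_k is the decreasing permutation of length k.
   Conversely every such direct sum is a 231-avoiding involution, and d_k has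
   a fixed point iff k is odd.  Writing I(n, a) for the number of these
   involutions of size n with a fixed points,
     I(n, a) = sum_(1 <= k <= n) I(n - k, a - [k odd]),
   so that I(n+2, a) = I(n+1, a-1) + 2 I(n, a) for n > 0, while
   I(2, a) = I(1, a-1) + I(0, a).  Since c_1 + 2 c_2 = n for an involution,
   the coefficient of t^a x^b in i(t, x) is I(a + 2b, a), and this
   recurrence is (1 - t - 2x) i(t, x) = 1 - x read coefficientwise. *)

From mathcomp Require Import all_boot all_algebra all_fingroup zify.
Set Implicit Arguments. Unset Strict Implicit. Unset Printing Implicit Defensive.
Import GRing.Theory.

Lemma decreasing_self_map N (f : nat -> nat) :
    (forall j, j < N -> f j < N) -> (forall i j, i < j < N -> f j < f i) ->
  forall j, j < N -> f j = N.-1 - j.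
Proof.
move=> f_bound f_decr.
have lower d : d < N -> d <= f (N.-1 - d).
  elim: d => [|d IHd] hd; first exact: leq0n.
  by have := f_decr (N.-1 - d.+1) (N.-1 - d) ltac:(lia); have := IHd ltac:(lia); lia.
have upper j : j < N -> f j <= N.-1 - j.
  elim: j => [|j IHj] hj; first by have := f_bound 0 hj; lia.
  by have := f_decr j j.+1 ltac:(lia); have := IHj ltac:(lia); lia.
move=> j hj; have := lower (N.-1 - j) ltac:(lia); have := upper j hj.
by rewrite (_ : N.-1 - (N.-1 - j) = j); lia.
Qed.

Definition decr k : seq nat := rev (iota 0 k).

Definition sum_decr k (s : seq nat) : seq nat := decr k ++ map (addn k) s.

Lemma size_sum_decr k s : size (sum_decr k s) = k + size s.
Proof. by rewrite size_cat size_rev size_iota size_map. Qed.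

Lemma nth_sum_decr k s i : i < k + size s ->
  nth 0 (sum_decr k s) i = if i < k then k.-1 - i else k + nth 0 s (i - k).
Proof.
move=> hi; rewrite nth_cat size_rev size_iota; case: ifP => ik.
  by rewrite nth_rev ?size_iota // nth_iota; lia.
by rewrite (nth_map 0) //; lia.
Qed.

Lemma sum_decr_inj k1 k2 s1 s2 : 0 < k1 -> 0 < k2 ->
  sum_decr k1 s1 = sum_decr k2 s2 -> k1 = k2 /\ s1 = s2.
Proof.
move=> k1_gt0 k2_gt0 e.
have head_sum_decr k s : 0 < k -> nth 0 (sum_decr k s) 0 = k.-1.
  by move=> k_gt0; rewrite nth_sum_decr ?k_gt0 ?subn0 //; lia.
have ek : k1 = k2 by have := head_sum_decr k1 s1 k1_gt0; rewrite e head_sum_decr //; lia.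
split=> //; move: e; rewrite -ek /sum_decr => /(congr1 (drop k1)).
by rewrite !drop_size_cat ?size_rev ?size_iota // => /inj_map; apply; apply: addnI.
Qed.

Record inv231 (n : nat) (s : seq nat) : Prop := Inv231 {
  inv231_size : size s = n;
  inv231_bound : forall i, i < n -> nth 0 s i < n;
  inv231_invol : forall i, i < n -> nth 0 s (nth 0 s i) = i;
  inv231_avoid : forall i j k, i < j -> j < k -> k < n ->
    ~~ (nth 0 s k < nth 0 s i < nth 0 s j) }.

Lemma inv231_sum_decr k n s : inv231 n s -> inv231 (k + n) (sum_decr k s).
Proof.
case=> sz bd iv av.
have nthE i : i < k + n ->
    nth 0 (sum_decr k s) i = if i < k then k.-1 - i else k + nth 0 s (i - k).
  by rewrite -sz; apply: nth_sum_decr.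
split; first by rewrite size_sum_decr sz.
- move=> i hi; rewrite nthE //; case: ifP => ik; first lia.
  by have := bd (i - k); lia.
- move=> i hi; rewrite (nthE i hi); case: ifP => ik.
    by rewrite nthE ?ifT; lia.
  have := bd (i - k) ltac:(lia); have := iv (i - k) ltac:(lia) => ivi bdi.
  by rewrite nthE ?ifF ?addKn ?ivi; lia.
move=> i j l ij jl ln; rewrite !nthE; try lia.
have := av (i - k) (j - k) (l - k).
by do 3 case: ifP => ?; lia.
Qed.

Lemma inv231_decr_prefix n s : inv231 n.+1 s ->
  exists2 m, m <= n & forall j, j <= m -> nth 0 s j = m - j.
Proof.
case=> _ bd iv av; set f := nth 0 s in bd iv av *; move def_m: (f 0) => m.
have m_le_n : m <= n by have := bd 0; lia.
have fm : f m = 0 by rewrite -def_m iv.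
have f_inj x y : x < n.+1 -> y < n.+1 -> f x = f y -> x = y.
  by move=> hx hy fxy; rewrite -(iv x hx) -(iv y hy) fxy.
have f_bound j : j < m.+1 -> f j < m.+1.
  rewrite ltnS; case: (posnP j) => [-> | j_gt0]; first by rewrite def_m.
  case: (ltngtP j m) => [jm _ | // | -> _]; last by rewrite fm.
  by have := av 0 j m; rewrite fm def_m; lia.
have f_decr i j : i < j < m.+1 -> f j < f i.
  case/andP=> ij; rewrite ltnS; case: (ltngtP j m) => [jm _ | // | jm _].
    have := f_inj i j; have := f_bound i; have := f_bound j.
    case: (posnP i) => [-> | i_gt0]; first by rewrite def_m; lia.
    by have := av i j m ij jm; have := f_inj i m; rewrite fm; lia.
  by have := f_inj i m; rewrite jm fm; lia.
by exists m => // j hj; apply: (decreasing_self_map f_bound f_decr); lia.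
Qed.

Lemma inv231_decr_tail k n s : inv231 (k + n) s ->
    (forall j, j < k -> nth 0 s j = k.-1 - j) ->
  exists2 t, inv231 n t & s = sum_decr k t.
Proof.
case=> sz bd iv av prefix; set f := nth 0 s in bd iv av prefix *.
have f_tail j : k <= j < k + n -> k <= f j.
  case/andP=> kj jn; case: (ltnP (f j) k) => // fjk.
  by have := iv j jn; rewrite prefix //; lia.
pose t := map (subn^~ k) (drop k s).
have nth_t i : i < n -> nth 0 t i = f (k + i) - k.
  by move=> hi; rewrite (nth_map 0) ?nth_drop // size_drop sz; lia.
have size_t : size t = n by rewrite size_map size_drop sz addKn.
exists t; first split=> //.
- by move=> i hi; rewrite nth_t //; have := bd (k + i); lia.
- move=> i hi; rewrite (nth_t i hi) nth_t; last by have := bd (k + i); lia.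
  by rewrite subnKC ?iv ?addKn //; [lia | apply: f_tail; lia].
- move=> i j l ij jl ln; rewrite !nth_t; try lia.
  have := av (k + i) (k + j) (k + l); have := f_tail (k + i); have := f_tail (k + j).
  by have := f_tail (k + l); lia.
apply: (@eq_from_nth _ 0); first by rewrite size_sum_decr size_t.
move=> i; rewrite sz => hi; rewrite nth_sum_decr ?size_t //.
case: ifP => ik; first exact: prefix.
by rewrite nth_t ?subnKC //; try apply: f_tail; lia.
Qed.

Lemma inv231_decomp n s : inv231 n.+1 s ->
  exists k, exists2 t, k <= n /\ inv231 (n - k) t & s = sum_decr k.+1 t.
Proof.
move=> hs; have [m m_le_n prefix] := inv231_decr_prefix hs.
exists m; have hs' : inv231 (m.+1 + (n - m)) s by rewrite addSn subnKC.
have [t ht ->] := inv231_decr_tail hs' prefix.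
by exists t.
Qed.

Definition fixpoints (s : seq nat) : nat :=
  count (fun i => nth 0 s i == i) (iota 0 (size s)).

Lemma fixpoints_le_size s : fixpoints s <= size s.
Proof. by rewrite -[leqRHS](size_iota 0) count_size. Qed.

Lemma fixpoints_decr k : fixpoints (decr k) = odd k.
Proof.
have k_half := odd_double_half k.
rewrite /fixpoints size_rev size_iota (@eq_in_count _ _ (fun i => odd k && (i == k./2))).
  case: (odd k) k_half => /= k_half; last by rewrite count_pred0.
  by rewrite (count_uniq_mem _ (iota_uniq 0 k)) mem_iota; lia.
move=> i; rewrite mem_iota => /andP [_ ik] /=.
rewrite nth_rev ?size_iota // nth_iota; last lia.
by case: (odd k) k_half => /= k_half; lia.
Qed.

Lemma fixpoints_sum_decr k s : fixpoints (sum_decr k s) = odd k + fixpoints s.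
Proof.
rewrite /fixpoints size_sum_decr iotaD count_cat; congr (_ + _).
  rewrite -fixpoints_decr /fixpoints size_rev size_iota.
  apply: eq_in_count => i; rewrite mem_iota => /andP [_ ik] /=.
  by rewrite nth_cat size_rev size_iota ik.
rewrite addnC iotaDl count_map; apply: eq_in_count => i; rewrite mem_iota => /andP [_ hi] /=.
by rewrite nth_sum_decr ?ifF ?addKn ?eqn_add2l //; lia.
Qed.

Lemma porbit_involution (T : finType) (p : {perm T}) x :
  p (p x) = x -> porbit p x = [set x; p x].
Proof.
move=> ppx; have iter_p i : iter i p x = if odd i then p x else x.
  by elim: i => [|i IHi] //=; rewrite IHi; case: (odd i).
apply/setP => y; rewrite !inE; apply/porbitP/orP => [[i ->] | [] /eqP ->].
- by rewrite permX iter_p; case: (odd i); [right | left].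
- by exists 0; rewrite expg0 perm1.
- by exists 1; rewrite expg1.
Qed.

Lemma card_porbit_eq1 (T : finType) (p : {perm T}) x : (#|porbit p x| == 1) = (p x == x).
Proof.
apply/idP/eqP => [/cards1P [y def_y] | px].
  have := mem_porbit p 1 x; have := porbit_id p x.
  by rewrite expg1 def_y !inE => /eqP -> /eqP.
by rewrite porbit_involution ?px ?setUid ?cards1.
Qed.

Section OneLine.
Variable n : nat.
Implicit Type p : 'S_n.

Lemma ncycles1 p : ncycles p 1 = #|[set x | p x == x]|.
Proof.
rewrite /ncycles; have -> : [set C in porbits p | #|C| == 1] = porbit p @: [set x | p x == x].
  apply/setP => C; rewrite inE; apply/andP/imsetP => [[/imsetP [x _ ->]] | [x]].
    by rewrite card_porbit_eq1 => px; exists x; rewrite ?inE.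
  by rewrite inE -card_porbit_eq1 => px ->; rewrite imset_f.
rewrite card_in_imset // => x y; rewrite !inE => /eqP px /eqP py.
by rewrite !porbit_involution ?px ?py ?setUid // => /set1_inj.
Qed.

Lemma cycles_le2P p : reflect (involutive p) (cycles_le2 p).
Proof.
apply: (iffP forallP) => [le2 x | ppx C]; last first.
  by apply/implyP => /imsetP [x _ ->]; rewrite porbit_involution // cards2; case: (x != p x).
have := le2 (porbit p x); rewrite imset_f // => /orP [] /eqP card_x;
  have := iter_porbit p x; rewrite card_x //= => px; by rewrite px.
Qed.

Lemma porbits_partition p : partition (porbits p) [set: 'I_n].
Proof.
have := @orbit_partition _ _ _ (perm_action 'I_n) <[p]>%G [set: 'I_n].
rewrite /porbits; have -> : porbit p @: 'I_n = orbit (perm_action 'I_n) <[p]> @: [set: 'I_n].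
  by apply/setP => C; apply/imsetP/imsetP => [] [x _ ->]; exists x; rewrite ?porbitE.
by apply; apply/actsP => a _ x; rewrite !inE.
Qed.

Lemma ncycles_le2_sum p : cycles_le2 p -> ncycles p 1 + 2 * ncycles p 2 = n.
Proof.
move=> /forallP le2; rewrite -[RHS]card_ord -cardsT (card_partition (porbits_partition p)).
rewrite (bigID (fun C : {set 'I_n} => #|C| == 1)) /ncycles -!sum1dep_card big_distrr /=.
congr (_ + _); first by apply: eq_bigr => C /andP [_ /eqP ->].
apply: eq_big => [C | C /andP [_ /eqP -> //]].
by case: (boolP (C \in porbits p)) => //= /(implyP (le2 C)) /orP [] /eqP ->.
Qed.

Definition oneline p : seq nat := [seq val (p i) | i <- enum 'I_n].

Lemma size_oneline p : size (oneline p) = n.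
Proof. by rewrite size_map size_enum_ord. Qed.

Lemma nth_oneline p (x : 'I_n) : nth 0 (oneline p) x = p x.
Proof. by rewrite (nth_map x) ?size_enum_ord // nth_ord_enum. Qed.

Lemma oneline_inj : injective oneline.
Proof. by move=> p q e; apply/permP => x; apply: val_inj; rewrite /= -!nth_oneline e. Qed.

Lemma fixpoints_oneline p : fixpoints (oneline p) = #|[set x | p x == x]|.
Proof.
rewrite /fixpoints size_oneline -val_enum_ord count_map -sum1dep_card -sum1_count.
by rewrite big_enum_cond; apply: eq_bigl => x /=; rewrite nth_oneline.
Qed.

Lemma in_I_oneline p : in_I p <-> inv231 n (oneline p).
Proof.
have nthE i (hi : i < n) : nth 0 (oneline p) i = p (Ordinal hi) by rewrite -nth_oneline.
split=> [/andP [av /cycles_le2P pp] | [_ _ iv av]].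
  split=> [|i hi|i hi|i j k ij jk kn]; first exact: size_oneline.
  - by rewrite nthE.
  - by rewrite (nthE i hi) nth_oneline pp.
  have hj := ltn_trans jk kn; have hi := ltn_trans ij hj.
  move/forallP/(_ (Ordinal hi))/forallP/(_ (Ordinal hj))/forallP/(_ (Ordinal kn)): av.
  by rewrite !nthE /= ij jk.
apply/andP; split.
  apply/forallP => x; apply/forallP => y; apply/forallP => z.
  have := av x y z; rewrite !nth_oneline => /(_ _ _ (ltn_ord z)).
  by case: (x < y)%N; case: (y < z)%N => //= ->.
by apply/cycles_le2P => x; apply: val_inj; rewrite /= -!nth_oneline iv.
Qed.

Lemma oneline_surj s : inv231 n s -> exists p, oneline p = s.
Proof.
case=> sz bd iv _; pose f (x : 'I_n) := Ordinal (bd x (ltn_ord x)).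
have f_inj : injective f.
  by move=> x y /(congr1 val) /= e; apply: val_inj; rewrite /= -(iv x) // -(iv y) // e.
exists (perm f_inj); apply: (@eq_from_nth _ 0); rewrite size_oneline ?sz // => i hi.
by rewrite -[i]/(val (Ordinal hi)) nth_oneline permE.
Qed.
End OneLine.

Definition inv231_seqs n : seq (seq nat) := [seq oneline p | p <- enum 'S_n & in_I p].

Lemma inv231_seqsP n s : reflect (inv231 n s) (s \in inv231_seqs n).
Proof.
apply: (iffP mapP) => [[p] | /[dup] hs /oneline_surj [p def_s]].
  by rewrite mem_filter => /andP [/in_I_oneline hp _] ->.
by exists p; rewrite // mem_filter mem_enum andbT in_I_oneline def_s.
Qed.

Lemma uniq_inv231_seqs n : uniq (inv231_seqs n).
Proof. by rewrite (map_inj_uniq (@oneline_inj n)) filter_uniq ?enum_uniq. Qed.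

Lemma perm_inv231_seqsS n : perm_eq (inv231_seqs n.+1)
  [seq sum_decr k s | k <- iota 1 n.+1, s <- inv231_seqs (n.+1 - k)].
Proof.
apply: uniq_perm; first exact: uniq_inv231_seqs.
  apply: allpairs_uniq_dep => [|k _|]; [exact: iota_uniq | exact: uniq_inv231_seqs |].
  move=> [k1 s1] [k2 s2] h1 h2.
  case/allpairsPdep: h1 => k [s [hk _ /(congr1 tag) /= ek1]].
  case/allpairsPdep: h2 => k' [s' [hk' _ /(congr1 tag) /= ek2]].
  move: hk hk'; rewrite -ek1 -ek2 !mem_iota => hk1 hk2 /= /sum_decr_inj [||-> ->] //; lia.
move=> s; apply/inv231_seqsP/allpairsPdep => [/inv231_decomp [k [t [kn ht] ->]] | ].
  by exists k.+1, t; rewrite mem_iota subSS; split=> //; apply/inv231_seqsP.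
move=> [k [t [+ /inv231_seqsP ht ->]]]; rewrite mem_iota => hk.
by rewrite -[n.+1](subnKC (_ : k <= n.+1)); [apply: inv231_sum_decr | lia].
Qed.

Definition ninv231 n a : nat := count (fun s => fixpoints s == a) (inv231_seqs n).

Lemma ninv231S n a : ninv231 n.+1 a =
  \sum_(1 <= k < n.+2) count (fun s => odd k + fixpoints s == a) (inv231_seqs (n.+1 - k)).
Proof.
rewrite /ninv231 (seq.permP (perm_inv231_seqsS n)) -sum1_count big_mkcond big_allpairs_dep.
apply: eq_bigr => k _; rewrite -sum1_count [RHS]big_mkcond.
by apply: eq_bigr => s _; rewrite fixpoints_sum_decr.
Qed.

Lemma ninv231_0 a : ninv231 0 a = (a == 0).
Proof.
have : perm_eq (inv231_seqs 0) [:: [::]].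
  apply: uniq_perm => [||s]; rewrite ?uniq_inv231_seqs // inE.
  by apply/inv231_seqsP/eqP => [[/size0nil] | ->].
by rewrite /ninv231 => /seq.permP ->; rewrite /= addn0 eq_sym.
Qed.

Lemma ninv231_gt n a : n < a -> ninv231 n a = 0.
Proof.
move=> na; rewrite /ninv231 (eq_in_count (a2 := pred0)) ?count_pred0 //.
by move=> s /inv231_seqsP [sz _ _ _] /=; have := fixpoints_le_size s; lia.
Qed.

Lemma ninv231SS n a : ninv231 n.+2 a =
  (if a is a'.+1 then ninv231 n.+1 a' else 0) + ninv231 n a +
  (if n is 0 then 0 else ninv231 n a).
Proof.
rewrite ninv231S big_ltn // big_ltn // -[3]/(1 + 2) big_addn !subSS !subn0.
rewrite addnA; congr (_ + _ + _).
  case: a => [|a]; last by apply: eq_count => s; rewrite /= add1n eqSS.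
  by rewrite (eq_count (a2 := pred0)) ?count_pred0.
case: n => [|n]; first by rewrite big_geq.
rewrite ninv231S; apply: eq_bigr => k _.
by rewrite addn2 !subSS /= negbK.
Qed.

Lemma ninv231_diag n : ninv231 n n = 1.
Proof.
elim: n => [|[|n] IHn]; first by rewrite ninv231_0.
  rewrite ninv231S big_nat1; transitivity (ninv231 0 0); last by rewrite ninv231_0.
  by apply: eq_count => s; rewrite /= ?add1n ?eqSS.
by rewrite ninv231SS IHn ninv231_gt //; case: n {IHn}.
Qed.

Lemma ninv231E n a : ninv231 n a = #|[set p : 'S_n | in_I p && (ncycles p 1 == a)]|.
Proof.
rewrite /ninv231 /inv231_seqs count_map count_filter -sum1dep_card -sum1_count big_enum_cond.
by apply: eq_bigl => p /=; rewrite fixpoints_oneline ncycles1 andbC.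
Qed.

Lemma card_in_I_ncycles n a b :
  #|[set p : 'S_n | in_I p && (ncycles p 1 == a) && (ncycles p 2 == b)]| =
  if n == a + 2 * b then ninv231 n a else 0.
Proof.
case: eqP => [n_eq | n_neq].
  rewrite ninv231E; apply: eq_card => p; rewrite !inE.
  by case: (boolP (in_I p)) => //= /andP [_ /ncycles_le2_sum]; lia.
apply: eq_card0 => p; rewrite !inE.
by case: (boolP (in_I p)) => //= /andP [_ /ncycles_le2_sum]; lia.
Qed.

Local Open Scope ring_scope.

Lemma i_gf_ninv231 a b : i_gf a b = (ninv231 (a + 2 * b)%N a)%:Z.
Proof.
rewrite /i_gf (eq_bigr _ (fun (i : 'I__) _ => card_in_I_ncycles i a b)) big_ord_recr /= eqxx.
by rewrite big1 ?add0n // => i _; rewrite ifN // neq_ltn ltn_ord.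
Qed.

Lemma fps_mul_den_poly (F : fps) a b : fps_mul den_poly F a b =
  F a b - (if a is a'.+1 then F a' b else 0) - 2 * (if b is b'.+1 then F a b' else 0).
Proof.
rewrite /fps_mul big_ord_recl big_ord_recl /= !subn0 [den_poly 0 0]/den_poly /= mul1r.
have -> : \sum_(i < b) den_poly 0 (lift ord0 i) * F a (b - lift ord0 i)%N =
    - (2 * (if b is b'.+1 then F a b' else 0)).
  case: b => [|b]; first by rewrite big_ord0 mulr0 oppr0.
  rewrite big_ord_recl big1 => [|i _]; last by rewrite /den_poly /= mul0r.
  by rewrite /= subSS subn0 [den_poly 0 1]/den_poly /= addr0 mulNr.
have -> : \sum_(i < a) \sum_(j < b.+1)
      den_poly (lift ord0 i) j * F (a - lift ord0 i)%N (b - j)%N =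
    - (if a is a'.+1 then F a' b else 0).
  case: a => [|a]; first by rewrite big_ord0 oppr0.
  rewrite big_ord_recl [X in _ + X]big1 ?addr0 => [|i _]; last first.
    by rewrite big1 // => j _; rewrite /den_poly /= mul0r.
  rewrite big_ord_recl big1 => [|j _]; last by rewrite /den_poly /= mul0r.
  by rewrite /= subSS !subn0 [den_poly 1 0]/den_poly /= !addr0 mulN1r.
by rewrite addrAC.
Qed.

Theorem lemma3p8 : forall a b : nat, fps_mul den_poly i_gf a b = num_poly a b.
Proof.
move=> a b; rewrite fps_mul_den_poly.
case: b => [|b]; case: a => [|a]; rewrite !i_gf_ninv231 /num_poly /=.
- by rewrite ninv231_0.
- by rewrite !muln0 !addn0 !ninv231_diag; lia.
- rewrite !add0n !mul2n doubleS ninv231SS; case: b => [|b]; first by rewrite ninv231_0.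
  by rewrite doubleS /=; lia.
- have -> : (a.+1 + 2 * b.+1 = (a + 2 * b).+3)%N by lia.
  have -> : (a + 2 * b.+1 = (a + 2 * b).+2)%N by lia.
  have -> : (a.+1 + 2 * b = (a + 2 * b).+1)%N by lia.
  by move: (a + 2 * b)%N => n; rewrite ninv231SS /=; lia.
Qed.
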